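(* Let $P$ be an integer such that $P^2+4$ is square-free, and let $m\ge 0$ be an integer. Consider the equation $$\sigma_2(n)-n^2=V_{2m}(P,-1)\,n-V_{2m}(P,-1)^2+5$$ in positive integers $n$. Then every solution $n$ with $n>\big(|V_{2m}(P,-1)|+V_{2m}(P,-1)^2-5\big)^3$ is of one of the following forms (so all solutions not of these forms lie in the finite, computable range $n\le(|V_{2m}(P,-1)|+V_{2m}(P,-1)^2-5)^3$): (1) $n=V_{2k}(P,-1)\,V_{2k+2m}(P,-1)$ for some integer $k\ge 0$, with $V_{2k}(P,-1)$ and $V_{2k+2m}(P,-1)$ both prime; (2) $n=V_{2k}(P,-1)\,V_{2m-2k}(P,-1)$ for some integer $k$ with $0\le k\le m$ and $m\ne 2k$, with $V_{2k}(P,-1)$ and $V_{2m-2k}(P,-1)$ both prime.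
   Context: For a positive integer $n$ and $k\ge 0$, $\sigma_k(n)=\sum_{d\mid n,\ d>0} d^k$. For integers $P,Q$, the Lucas sequences are defined for $j\ge 0$ by $U_0(P,Q)=0$, $U_1(P,Q)=1$, $U_j(P,Q)=P\,U_{j-1}(P,Q)-Q\,U_{j-2}(P,Q)$ for $j>1$, and $V_0(P,Q)=2$, $V_1(P,Q)=P$, $V_j(P,Q)=P\,V_{j-1}(P,Q)-Q\,V_{j-2}(P,Q)$ for $j>1$. An integer is square-free if it is not divisible by the square of any prime. *)

From mathcomp Require Import all_boot all_order all_algebra.
Set Implicit Arguments. Unset Strict Implicit. Unset Printing Implicit Defensive.
Import Order.TTheory GRing.Theory Num.Theory.
Local Open Scope ring_scope.

Definition sigma (k n : nat) : nat := (\sum_(d <- divisors n) d ^ k)%N.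

Fixpoint lucasU (P Q : int) (j : nat) : int :=
  match j with
  | 0%N => 0
  | 1%N => 1
  | S ((S j') as j1) => P * lucasU P Q j1 - Q * lucasU P Q j'
  end.

Fixpoint lucasV (P Q : int) (j : nat) : int :=
  match j with
  | 0%N => 2
  | 1%N => P
  | S ((S j') as j1) => P * lucasV P Q j1 - Q * lucasV P Q j'
  end.

Definition squarefree_int (z : int) : Prop :=
  forall p : nat, prime p -> ~ ((p ^ 2)%:Z %| z)%Z.

Definition int_prime (z : int) : Prop := exists2 p : nat, prime p & z = p%:Z.

From mathcomp Require Import all_boot all_order all_algebra.
From mathcomp Require Import zify ring lra.
Import Order.TTheory GRing.Theory Num.Theory.

(* Write c = V_{2m} and D = P^2 + 4.  Let p be the least prime factor of n and
   n = a p.  If n is prime, the square of a prime, or a is composite (so that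
   a >= p^2), the equation forces p < c and n < c^3, which lies below the bound.
   Otherwise n = p q with distinct primes p, q, and the equation becomes
   p^2 - c p q + q^2 = 4 - c^2.  Completing the square,
   (2 q - c p)^2 = (c^2 - 4)(p^2 - 4) = D U_{2m}^2 (p^2 - 4), so, D being
   square-free, p^2 - D s^2 = 4 for some integer s.  The non-negative solutions
   of this Pell equation are exactly the pairs (V_{2k}, U_{2k}), and the addition
   formulas for V then identify {p, q} with {V_{2k}, V_{2k+2m}} or
   {V_{2k}, V_{2m-2k}}. *)

Set Implicit Arguments.
Unset Strict Implicit.
Unset Printing Implicit Defensive.

Lemma sigmaE k n (s : seq nat) : 0 < n -> uniq s -> (forall d, (d %| n) = (d \in s)) ->
  sigma k n = \sum_(d <- s) d ^ k.
Proof.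
move=> n_gt0 s_uniq s_div; apply/perm_big/uniq_perm => // [|d].
  exact: divisors_uniq.
by rewrite -dvdn_divisors.
Qed.

Lemma leq_sum_divisors_sigma k n (s : seq nat) : 0 < n -> uniq s ->
  {subset s <= [pred d | d %| n]} -> \sum_(d <- s) d ^ k <= sigma k n.
Proof.
move=> n_gt0 s_uniq s_div.
apply: (uniq_sub_le_big leqnn (fun x y => leq_addr y x)) => // [|d /s_div].
  exact: divisors_uniq.
by rewrite inE dvdn_divisors.
Qed.

Lemma sigma_prime k p : prime p -> sigma k p = 1 + p ^ k.
Proof.
move=> p_pr; rewrite (@sigmaE k p [:: 1; p]) ?prime_gt0 //.
- by rewrite !big_cons big_nil exp1n addn0.
- by rewrite /= inE andbT neq_ltn prime_gt1.
move=> d; rewrite !inE; apply/idP/idP; first by case/primeP: p_pr => _ /(_ d).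
by case/orP=> /eqP ->.
Qed.

Lemma sigma_prime_sqr k p : prime p -> sigma k (p ^ 2) = 1 + p ^ k + (p ^ 2) ^ k.
Proof.
move=> p_pr; have p_gt1 := prime_gt1 p_pr.
rewrite (@sigmaE k (p ^ 2) [:: 1; p; p ^ 2]) ?expn_gt0 ?prime_gt0 //.
- by rewrite !big_cons big_nil exp1n addn0 addnA.
- by rewrite /= !inE; nia.
move=> d; rewrite !inE; apply/idP/idP.
  by case/(dvdn_pfactor _ _ p_pr) => -[|[|[]]] // _ ->; rewrite eqxx ?orbT.
by case/or3P=> /eqP ->; [exact: dvd1n | exact: (@dvdn_exp2l p 1 2) | exact: dvdnn].
Qed.

Lemma sigma_mul_primes k p q : prime p -> prime q -> p != q ->
  sigma k (p * q) = 1 + p ^ k + q ^ k + (p * q) ^ k.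
Proof.
move=> p_pr q_pr /eqP neq_pq; have p_gt1 := prime_gt1 p_pr; have q_gt1 := prime_gt1 q_pr.
rewrite (@sigmaE k (p * q) [:: 1; p; q; p * q]) ?muln_gt0 ?prime_gt0 //.
- by rewrite !big_cons big_nil exp1n addn0 !addnA.
- by rewrite /= !inE; nia.
move=> d; rewrite !inE; apply/idP/idP => [d_pq|]; last first.
  by case/or4P=> /eqP ->; [exact: dvd1n | exact: dvdn_mulr | exact: dvdn_mull | exact: dvdnn].
have [p_d|p_nd] := boolP (p %| d).
  move: d_pq; rewrite -(divnK p_d) mulnC dvdn_pmul2l ?prime_gt0 // => d_q.
  by case/primeP: q_pr => _ /(_ _ d_q) /orP[] /eqP ->; rewrite ?muln1 eqxx ?orbT.
have d_q : d %| q by rewrite -(@Gauss_dvdr d p) // coprime_sym prime_coprime.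
by case/primeP: q_pr => _ /(_ _ d_q) /orP[] /eqP ->; rewrite eqxx ?orbT.
Qed.

Lemma pdiv_sqr_leq_cofactor n : 1 < n %/ pdiv n -> ~~ prime (n %/ pdiv n) ->
  pdiv n ^ 2 <= n %/ pdiv n.
Proof.
set a := n %/ pdiv n => a_gt1 a_npr.
have pdiv_a_le : pdiv n <= pdiv a.
  apply: pdiv_min_dvd; first by rewrite prime_gt1 ?pdiv_prime.
  by apply: dvdn_trans (pdiv_dvd a) _; rewrite -[X in _ %| X](divnK (pdiv_dvd n)) dvdn_mulr.
have : pdiv a ^ 2 <= a by rewrite leqNgt; apply: contra a_npr; apply: ltn_pdiv2_prime; lia.
nia.
Qed.

Lemma squarefree_dvd_sqr (d r : nat) : (forall p, prime p -> ~~ (p ^ 2 %| d)) ->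
  d %| r ^ 2 -> d %| r.
Proof.
move=> d_sqf d_r2; have [d0|d_gt0] := posnP d.
  by move: d_r2; rewrite d0 !dvd0n expn_eq0 andbT.
apply/dvdn_partP => // p; rewrite mem_primes => /and3P[p_pr _ p_d].
have p_r : p %| r by move: (dvdn_trans p_d d_r2); rewrite Euclid_dvdX // => /andP[].
rewrite p_part; apply: dvdn_trans p_r; rewrite -[X in _ %| X](expn1 p) dvdn_exp2l ?prime_gt1 //.
by rewrite leqNgt -pfactor_dvdn // d_sqf.
Qed.

Local Open Scope ring_scope.

Lemma squarefree_int_dvd_sqr (d r : int) : squarefree_int d -> (d %| r ^+ 2)%Z -> (d %| r)%Z.
Proof.
move=> d_sqf; rewrite !dvdzE abszX; apply: squarefree_dvd_sqr => p p_pr.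
by apply/negP => /(d_sqf p p_pr).
Qed.

Lemma dvdz_prime_sqr (p : nat) (a : int) : prime p -> (p%:Z %| a ^+ 2)%Z -> (p%:Z %| a)%Z.
Proof. by move=> p_pr; rewrite !dvdzE abszX Euclid_dvdX // => /andP[]. Qed.

Definition sigma2_eqn (c : int) (n : nat) : Prop :=
  (sigma 2 n)%:Z - (n ^ 2)%:Z = c * n%:Z - c ^+ 2 + 5.

Lemma sigma2_eqn_prime (c : int) p : 2 <= c -> prime p -> sigma2_eqn c p -> p%:Z < c.
Proof.
move=> c_ge2 p_pr; rewrite /sigma2_eqn sigma_prime //; nia.
Qed.

Lemma sigma2_eqn_prime_sqr (c : int) p : 2 <= c -> prime p -> sigma2_eqn c (p ^ 2) -> p%:Z < c.
Proof.
move=> c_ge2 p_pr; have := prime_gt1 p_pr; rewrite /sigma2_eqn sigma_prime_sqr //; nia.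
Qed.

Lemma sigma2_eqn_large_cofactor (c : int) p a : 2 <= c -> prime p -> (p ^ 2 <= a)%N ->
  sigma2_eqn c (a * p) -> a%:Z < c * p%:Z.
Proof.
move=> c_ge2 p_pr p2_le_a; have p_gt1 := prime_gt1 p_pr.
have : (\sum_(d <- [:: 1; p; a; a * p]) d ^ 2 <= sigma 2 (a * p))%N.
  apply: leq_sum_divisors_sigma; [nia | rewrite /= !inE; nia |].
  move=> d; rewrite !inE => /or4P[] /eqP ->;
    [exact: dvd1n | exact: dvdn_mull | exact: dvdn_mulr | exact: dvdnn].
rewrite /sigma2_eqn !big_cons big_nil; nia.
Qed.

Lemma sigma2_eqn_mul_primes (c : int) p q : prime p -> prime q -> p != q ->
  sigma2_eqn c (p * q) -> p%:Z ^+ 2 - c * p%:Z * q%:Z + q%:Z ^+ 2 = 4 - c ^+ 2.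
Proof. by move=> p_pr q_pr neq_pq; rewrite /sigma2_eqn sigma_mul_primes //; nia. Qed.

Lemma cube_le_sigma2_bound (c : int) : 3 <= c -> c ^+ 3 <= (`|c| + c ^+ 2 - 5) ^+ 3.
Proof. by move=> c_ge3; rewrite ger0_norm ?lerXn2r ?nnegrE; nia. Qed.

Lemma sigma2_eqn_semiprime_or_small (c : int) n : 2 <= c -> (0 < n)%N -> sigma2_eqn c n ->
  (exists p q, [/\ prime p, prime q, p != q & n = (p * q)%N])
  \/ n%:Z <= (`|c| + c ^+ 2 - 5) ^+ 3.
Proof.
move=> c_ge2 n_gt0 eqn.
have [n1|n_gt1] := leqP n 1.
  by right; rewrite ger0_norm; nia.
have := @pdiv_sqr_leq_cofactor n; have := esym (divnK (pdiv_dvd n)).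
move: (pdiv n) (n %/ pdiv n)%N (pdiv_prime n_gt1) => p a p_pr nE large_cofactor.
have p_gt1 := prime_gt1 p_pr.
have [[a_pr neq_ap] | [p_lt_c n_lt_c3]] : (prime a /\ a != p) \/ (p%:Z < c /\ n%:Z < c ^+ 3).
  have [a_le1|a_gt1] := leqP a 1.
    have a1 : a = 1%N by move: n_gt0; rewrite nE muln_gt0; lia.
    by move: eqn; rewrite nE a1 mul1n => /(sigma2_eqn_prime c_ge2 p_pr) p_lt_c; right; nia.
  have [a_pr|a_npr] := boolP (prime a).
    have [a_p|] := eqVneq a p; last by left.
    have nE' : n = (p ^ 2)%N by rewrite nE a_p mulnn.
    by move: eqn; rewrite nE' => /(sigma2_eqn_prime_sqr c_ge2 p_pr) p_lt_c; right; nia.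
  have p2_le_a := large_cofactor a_gt1 a_npr.
  by move: eqn; rewrite nE => /(sigma2_eqn_large_cofactor c_ge2 p_pr p2_le_a) a_lt; right; nia.
- by left; exists p, a; rewrite nE mulnC eq_sym.
- have /cube_le_sigma2_bound : 3 <= c by lia.
  by right; lia.
Qed.

Lemma lucas_rec_uniq (P Q : int) (f g : nat -> int) :
  (forall n, f n.+2 = P * f n.+1 - Q * f n) ->
  (forall n, g n.+2 = P * g n.+1 - Q * g n) ->
  f 0%N = g 0%N -> f 1%N = g 1%N -> f =1 g.
Proof.
move=> f_rec g_rec fg0 fg1; suff fg n : f n = g n /\ f n.+1 = g n.+1 by move=> n; case: (fg n).
elim: n => [//|n [fg_n fg_n1]]; split=> //.
by rewrite f_rec g_rec fg_n fg_n1.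
Qed.

Section LucasIdentities.

Variables P Q : int.
Local Notation U := (lucasU P Q).
Local Notation V := (lucasV P Q).
Local Notation Delta := (P ^+ 2 - 4 * Q).

Lemma lucasU_succ n : 2 * U n.+1 = P * U n + V n.
Proof.
apply: (@lucas_rec_uniq P Q (fun n => 2 * U n.+1) (fun n => P * U n + V n))
  => [k|k||] /=; ring.
Qed.

Lemma lucasV_succ n : 2 * V n.+1 = P * V n + Delta * U n.
Proof.
apply: (@lucas_rec_uniq P Q (fun n => 2 * V n.+1) (fun n => P * V n + Delta * U n))
  => [k|k||] /=; ring.
Qed.

Lemma lucasV_add i j : 2 * V (i + j) = V i * V j + Delta * U i * U j.
Proof.
apply: (@lucas_rec_uniq P Q (fun j => 2 * V (i + j)) (fun j => V i * V j + Delta * U i * U j))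
  => [k|k||] /=.
- by rewrite !addnS /=; ring.
- by ring.
- by rewrite addn0; ring.
- by rewrite addn1 lucasV_succ; ring.
Qed.

Lemma lucasU_add i j : 2 * U (i + j) = U i * V j + V i * U j.
Proof.
apply: (@lucas_rec_uniq P Q (fun j => 2 * U (i + j)) (fun j => U i * V j + V i * U j))
  => [k|k||] /=.
- by rewrite !addnS /=; ring.
- by ring.
- by rewrite addn0; ring.
- by rewrite addn1 lucasU_succ; ring.
Qed.

Lemma lucas_norm n : V n ^+ 2 - Delta * U n ^+ 2 = 4 * Q ^+ n.
Proof.
elim: n => [|n IHn]; first by rewrite /=; ring.
have norm4 : 4 * (V n.+1 ^+ 2 - Delta * U n.+1 ^+ 2) = 4 * (Q * (4 * Q ^+ n)).
  rewrite -IHn; transitivity ((2 * V n.+1) ^+ 2 - Delta * (2 * U n.+1) ^+ 2); first by ring.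
  by rewrite lucasV_succ lucasU_succ; ring.
by rewrite [Q ^+ n.+1]exprS; lia.
Qed.

Lemma lucasV_sub i j : (j <= i)%N -> V i * V j - Delta * U i * U j = 2 * Q ^+ j * V (i - j).
Proof.
move=> le_ji; have Vi := lucasV_add (i - j) j; have Ui := lucasU_add (i - j) j.
rewrite subnK // in Vi Ui.
have : 2 * (V i * V j - Delta * U i * U j) = 2 * (2 * Q ^+ j * V (i - j)).
  transitivity ((2 * V i) * V j - Delta * (2 * U i) * U j); first by ring.
  rewrite Vi Ui; transitivity (V (i - j) * (V j ^+ 2 - Delta * U j ^+ 2)); first by ring.
  by rewrite lucas_norm; ring.
lia.
Qed.

End LucasIdentities.

Lemma lucasV_opp (P Q : int) n : lucasV (- P) Q n = (-1) ^+ n * lucasV P Q n.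
Proof.
apply: (@lucas_rec_uniq (- P) Q _ (fun n => (-1) ^+ n * lucasV P Q n)) => [k|k||] /=;
  rewrite ?exprS; ring.
Qed.

Section EvenLucas.

Variable P : int.
Local Notation W k := (lucasV P (-1) (2 * k)).
Local Notation Z k := (lucasU P (-1) (2 * k)).
Local Notation D := (P ^+ 2 + 4).

Lemma evenV_add a b : 2 * W (a + b) = W a * W b + D * Z a * Z b.
Proof. by rewrite mulnDr lucasV_add mulrN1 opprK. Qed.

Lemma evenU_add a b : 2 * Z (a + b) = Z a * W b + W a * Z b.
Proof. by rewrite mulnDr lucasU_add. Qed.

Lemma evenV_norm k : W k ^+ 2 - D * Z k ^+ 2 = 4.
Proof. by rewrite lucas_norm exprM sqrrN !expr1n mulr1. Qed.

Lemma evenV_sub a b : (b <= a)%N -> W a * W b - D * Z a * Z b = 2 * W (a - b).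
Proof.
move=> le_ba; rewrite mulnBr lucasV_sub ?leq_mul2l //.
by rewrite exprM sqrrN !expr1n mulr1.
Qed.

Lemma evenV_succ k : 2 * W k.+1 = (P ^+ 2 + 2) * W k + P * D * Z k.
Proof. by rewrite -[k.+1]addn1 evenV_add /=; ring. Qed.

Lemma evenU_succ k : 2 * Z k.+1 = P * W k + (P ^+ 2 + 2) * Z k.
Proof. by rewrite -[k.+1]addn1 evenU_add /=; ring. Qed.

Lemma pell4_parity (x z : int) : x ^+ 2 - D * z ^+ 2 = 4 -> exists e, x = P * z + 2 * e.
Proof.
move=> pell; have /(@dvdz_prime_sqr 2 _ isT)/dvdzP[e xPzE] : (2 %| (x - P * z) ^+ 2)%Z.
  by apply/dvdzP; exists (2 + 2 * z ^+ 2 + P ^+ 2 * z ^+ 2 - P * x * z); lia.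
by exists e; lia.
Qed.

Hypothesis P_gt0 : 0 < P.

Lemma evenV_ge2_evenU_ge0 k : 2 <= W k /\ 0 <= Z k.
Proof.
elim: k => [|k [W_ge2 Z_ge0]]; first by [].
have := evenV_succ k; have := evenU_succ k; nia.
Qed.

Lemma evenU_gt0 k : (0 < k)%N -> 0 < Z k.
Proof.
case: k => // k _; have [W_ge2 Z_ge0] := evenV_ge2_evenU_ge0 k.
have := evenU_succ k; nia.
Qed.

Lemma pell4_evenLucas (x z : int) : 0 <= x -> 0 <= z -> x ^+ 2 - D * z ^+ 2 = 4 ->
  exists k, x = W k /\ z = Z k.
Proof.
(* Descent by the unit ((P^2 + 2) + P sqrt D) / 2: with x = P z + 2 e, the
   solution (x, z) comes from ((P^2 + 2) e - P z, z - P e), which has smaller z. *)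
move Nz : `|z|%N => N; elim/ltn_ind: N x z Nz => N IHN x z Nz x_ge0 z_ge0 pell.
have [z0|z_gt0] : z = 0 \/ 0 < z by lia.
  by exists 0%N; move: pell; rewrite z0 /=; split; [nia|].
have [e xE] := pell4_parity pell.
have norm1 : e ^+ 2 + P * z * e - z ^+ 2 = 1 by move: pell; rewrite xE; nia.
have e_gt0 : 0 < e by nia.
have Pe_le_z : P * e <= z by nia.
have Pz_le : P * z <= (P ^+ 2 + 2) * e by nia.
have [k [xE' zE']] : exists k, (P ^+ 2 + 2) * e - P * z = W k /\ z - P * e = Z k.
  apply: (IHN `|(z - P * e)%R|%N); [lia | by [] | lia | lia | lia].
exists k.+1; split.
  by have := evenV_succ k; rewrite -xE' -zE' xE; lia.
by have := evenU_succ k; rewrite -xE' -zE'; lia.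
Qed.

Hypothesis D_sqf : squarefree_int D.

Lemma evenV_quadratic_pell m (x y : int) : (0 < m)%N ->
  x ^+ 2 - W m * x * y + y ^+ 2 = 4 - W m ^+ 2 ->
  exists s, x ^+ 2 - D * s ^+ 2 = 4 /\ 2 * y = W m * x + D * Z m * s.
Proof.
move=> m_gt0 quad; have Zm_gt0 := evenU_gt0 m_gt0; have normm := evenV_norm m.
set c := W m in quad normm *; set Zm := Z m in Zm_gt0 normm *.
have t_sqr : (2 * y - c * x) ^+ 2 = Zm ^+ 2 * (D * (x ^+ 2 - 4)).
  transitivity ((c ^+ 2 - 4) * (x ^+ 2 - 4)); first by lia.
  by rewrite (_ : c ^+ 2 - 4 = D * Zm ^+ 2); [ring | lia].
have /dvdzP[r tE] : (Zm %| 2 * y - c * x)%Z.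
  by rewrite -(dvdz_pexp2r _ _ (isT : (0 < 2)%N)) t_sqr dvdz_mulr.
have Zm2_neq0 : Zm ^+ 2 != 0 by rewrite expf_neq0 ?gt_eqF.
have r_sqr : r ^+ 2 = D * (x ^+ 2 - 4).
  by apply: (mulfI Zm2_neq0); rewrite -t_sqr tE; ring.
have /dvdzP[s rE] : (D %| r)%Z.
  by apply: squarefree_int_dvd_sqr => //; rewrite r_sqr dvdz_mulr.
exists s; split; last by rewrite (_ : 2 * y = c * x + r * Zm) ?rE; [ring | lia].
have D_neq0 : D != 0 by rewrite gt_eqF //; nia.
apply: (mulfI D_neq0); transitivity (D * x ^+ 2 - r ^+ 2).
  by rewrite rE; ring.
by rewrite r_sqr; ring.
Qed.

Lemma evenV_quadratic_solutions m (x y : int) : (0 < m)%N -> 0 <= x ->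
  x ^+ 2 - W m * x * y + y ^+ 2 = 4 - W m ^+ 2 ->
  [\/ exists k, x = W k /\ y = W (k + m),
      exists k, x = W (k + m) /\ y = W k
    | exists2 k, (k <= m)%N & x = W k /\ y = W (m - k)].
Proof.
move=> m_gt0 x_ge0 /(evenV_quadratic_pell m_gt0)[s [pell yE]].
have [k [xE sE]] : exists k, x = W k /\ `|s| = Z k.
  by apply: pell4_evenLucas; rewrite ?real_normK ?num_real.
have two_neq0 : 2 != 0 :> int by [].
have [s_ge0|s_lt0] := lerP 0 s.
  apply: Or31; exists k; split => //; move: sE; rewrite ger0_norm // => sE.
  by apply: (mulfI two_neq0); rewrite yE xE sE [(k + m)%N]addnC evenV_add.
move: sE; rewrite ltr0_norm // => /(canRL opprK) sE.
have [le_km|lt_mk] := leqP k m.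
  apply: Or33; exists k => //; split => //.
  by apply: (mulfI two_neq0); rewrite -(evenV_sub le_km) yE xE sE; ring.
apply: Or32; exists (k - m)%N; rewrite subnK ?(ltnW lt_mk) //; split => //.
by apply: (mulfI two_neq0); rewrite -(evenV_sub (ltnW lt_mk)) yE xE sE; ring.
Qed.

Lemma sigma2_eqn_evenV_solutions m n : (0 < n)%N -> sigma2_eqn (W m) n ->
  (`|W m| + W m ^+ 2 - 5) ^+ 3 < n%:Z ->
  (exists k, n%:Z = W k * W (k + m) /\ int_prime (W k) /\ int_prime (W (k + m)))
  \/ (exists k, (k <= m)%N /\ m <> (2 * k)%N /\ n%:Z = W k * W (m - k) /\
                 int_prime (W k) /\ int_prime (W (m - k))).
Proof.
move=> n_gt0 eqn n_large; have [Wm_ge2 _] := evenV_ge2_evenU_ge0 m.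
case: (sigma2_eqn_semiprime_or_small Wm_ge2 n_gt0 eqn); last by rewrite leNgt n_large.
move=> [p [q [p_pr q_pr neq_pq nE]]]; rewrite nE PoszM.
move: eqn; rewrite nE => /(sigma2_eqn_mul_primes p_pr q_pr neq_pq) quad.
have m_gt0 : (0 < m)%N.
  rewrite lt0n; apply: contraNneq neq_pq => m0; move: quad; rewrite m0 /= => quad.
  have : (p%:Z - q%:Z) ^+ 2 = 0 by lia.
  by move/eqP; rewrite expf_eq0 subr_eq0 eqz_nat.
case: (evenV_quadratic_solutions m_gt0 _ quad) => // [[k [pE qE]]|[k [pE qE]]|[k le_km [pE qE]]].
- by left; exists k; rewrite -pE -qE; do !split => //; [exists p | exists q].
- by left; exists k; rewrite -pE -qE mulrC; do !split => //; [exists q | exists p].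
right; exists k; rewrite -pE -qE; do !split => //; [|by exists p | by exists q].
by move=> mE; move: neq_pq; rewrite -(eqz_nat p q) pE qE (_ : (m - k = k)%N) ?eqxx //; lia.
Qed.

End EvenLucas.

Lemma lucasV_even_normr (P Q : int) k : lucasV `|P| Q (2 * k) = lucasV P Q (2 * k).
Proof.
have [/ger0_norm -> // | /ltr0_norm ->] := lerP 0 P.
by rewrite lucasV_opp exprM sqrrN !expr1n mul1r.
Qed.

Theorem theorem1p6 (P : int) (m : nat) :
  squarefree_int (P ^+ 2 + 4) ->
  forall n : nat, (0 < n)%N ->
    (sigma 2 n)%:Z - (n ^ 2)%:Z =
      lucasV P (-1) (2 * m) * n%:Z - lucasV P (-1) (2 * m) ^+ 2 + 5 ->
    (`|lucasV P (-1) (2 * m)| + lucasV P (-1) (2 * m) ^+ 2 - 5) ^+ 3 < n%:Z ->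
    (exists k : nat,
        n%:Z = lucasV P (-1) (2 * k) * lucasV P (-1) (2 * k + 2 * m) /\
        int_prime (lucasV P (-1) (2 * k)) /\
        int_prime (lucasV P (-1) (2 * k + 2 * m)))
    \/
    (exists k : nat, (k <= m)%N /\ m <> (2 * k)%N /\
        n%:Z = lucasV P (-1) (2 * k) * lucasV P (-1) (2 * m - 2 * k) /\
        int_prime (lucasV P (-1) (2 * k)) /\
        int_prime (lucasV P (-1) (2 * m - 2 * k))).
Proof.
move=> D_sqf n n_gt0 eqn n_large.
have absP_gt0 : 0 < `|P|.
  by rewrite normr_gt0; apply: contraPneq (D_sqf 2%N isT) => ->.
have absD_sqf : squarefree_int (`|P| ^+ 2 + 4) by rewrite real_normK ?num_real.
rewrite -!(lucasV_even_normr P) in eqn n_large.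
case: (sigma2_eqn_evenV_solutions absP_gt0 absD_sqf n_gt0 eqn n_large) => -[k sol].
  by left; exists k; rewrite -mulnDr -!(lucasV_even_normr P).
by right; exists k; rewrite -mulnBr -!(lucasV_even_normr P).
Qed.
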